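(* For every positive integer $n$, there is a temporal graph $G$ on $n$ vertices and a vertex $s$ of $G$ such that every single-source temporal preserver of $G$ with respect to $s$ has size $\Theta(n^2)$.
   Context: A temporal graph is an undirected graph $G=(V,E)$ with a labeling $\lambda:E\to\mathbb{N}^+$. A temporal path is a path whose traversed edges have non-decreasing labels in the order of traversal; its length is its number of edges, and $d_G(u,v)$ is the minimum length of a temporal path from $u$ to $v$ in $G$ ($+\infty$ if none). A single-source temporal preserver of $G$ w.r.t. $s$ is a subgraph $H$ with $V(H)=V$, $E(H)\subseteq E$ (same labels), such that $d_H(s,v)= d_G(s,v)$ for every $v\in V$. Its size is its number of edges. *)

From mathcomp Require Import all_boot.
Set Implicit Arguments. Unset Strict Implicit. Unset Printing Implicit Defensive.

Record tgraph (n : nat) := TGraph {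
  tedges : {set {set 'I_n}};
  tlab   : {set 'I_n} -> nat }.

Definition tgraph_wf n (G : tgraph n) : Prop :=
  forall e, e \in tedges G -> #|e| = 2 /\ 0 < tlab G e.

Definition tsubgraph n (H G : tgraph n) : Prop :=
  tedges H \subset tedges G /\
  forall e, e \in tedges H -> tlab H e = tlab G e.

Definition is_tpath n (G : tgraph n) (u : 'I_n) (p : seq 'I_n) : bool :=
  [&& uniq (u :: p),
      all (fun xy => [set xy.1; xy.2] \in tedges G) (zip (u :: p) p)
    & sorted leq (pairmap (fun x y => tlab G [set x; y]) u p)].

Definition treach n (G : tgraph n) (u v : 'I_n) (k : nat) : bool :=
  [exists p : k.-tuple 'I_n, is_tpath G u p && (last u p == v)].

(* Since paths have distinct vertices,
   their length is < n, so searching lengths 0 .. n-1 suffices. *)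
Definition tdist n (G : tgraph n) (u v : 'I_n) : option nat :=
  let k := find (treach G u v) (iota 0 n) in
  if k < n then Some k else None.

Definition tpreserver n (G H : tgraph n) (s : 'I_n) : Prop :=
  tsubgraph H G /\ forall v, tdist H s v = tdist G s v.

Definition tgsize n (H : tgraph n) : nat := #|tedges H|.

From mathcomp Require Import all_boot zify.
Set Implicit Arguments. Unset Strict Implicit. Unset Printing Implicit Defensive.

(* The graph is the union of m temporal paths P_0, ..., P_(m-1) leaving the
   source 0: P_j has length 2(m - j), ends at a target lying on no other path,
   and its labels increase along it and all lie below those of P_(j+1).  No two
   paths share an edge, and a vertex other than 0 shared by P_j and a later P_j'
   lies strictly closer to the source on P_j'.  So a temporal path can leave its
   current path only for a later one and only by moving back in position: its
   i-th edge has position at most i on its path.  Hence P_j is the only temporal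
   path of length at most 2(m - j) to its target, every preserver contains all
   m(m + 1) edges of the paths, and with n about 5m vertices this is Theta(n^2). *)

Lemma set2_shared (T : finType) (u v z : T) : [set u; v] = [set v; z] -> u = z.
Proof.
move=> e; have : u \in [set v; z] by rewrite -e set21.
rewrite !inE => /orP [/eqP eq_uv | /eqP //].
have : z \in [set u; v] by rewrite e set22.
by rewrite eq_uv !inE orbb => /eqP.
Qed.

Definition tedge_at n (u : 'I_n) (p : seq 'I_n) i : {set 'I_n} :=
  [set nth u (u :: p) i; nth u (u :: p) i.+1].

Section TemporalPaths.

Variable n : nat.
Implicit Types G H : tgraph n.

Lemma is_tpathP G u p :
  reflect [/\ uniq (u :: p),
              forall i, i < size p -> tedge_at u p i \in tedges G
            & forall i, i.+1 < size p -> tlab G (tedge_at u p i) <= tlab G (tedge_at u p i.+1)]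
          (is_tpath G u p).
Proof.
have size_zip_p : size (zip (u :: p) p) = size p by rewrite size_zip /=; lia.
apply: (iffP and3P) => -[uniq_p edges_p sorted_p]; split => //.
- move=> i lt_ip; move/(all_nthP (u, u))/(_ i): edges_p.
  by rewrite size_zip_p nth_zip_cond size_zip_p lt_ip; apply.
- move=> i lt_ip; move/(sortedP 0)/(_ i): sorted_p.
  rewrite size_pairmap => /(_ lt_ip).
  by rewrite !(nth_pairmap u) //; apply: ltnW.
- apply/(all_nthP (u, u)) => i; rewrite size_zip_p => lt_ip.
  by rewrite nth_zip_cond size_zip_p lt_ip; apply: edges_p.
- apply/(sortedP 0) => i; rewrite size_pairmap => lt_ip.
  rewrite !(nth_pairmap u) //; last exact: ltnW.
  exact: sorted_p.
Qed.

Lemma tedge_at_succ_neq G u p i :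
  is_tpath G u p -> i.+1 < size p -> tedge_at u p i != tedge_at u p i.+1.
Proof.
case/and3P => uniq_p _ _ lt_ip; apply/eqP => /set2_shared eq_i_i2.
have : (nth u (u :: p) i == nth u (u :: p) i.+2) = (i == i.+2).
  by apply: nth_uniq => //=; lia.
by rewrite eq_i_i2 eqxx => /esym/eqP; lia.
Qed.

Lemma tpath_subgraph G H u p : tsubgraph H G -> is_tpath H u p -> is_tpath G u p.
Proof.
case=> sub_HG lab_HG /is_tpathP [uniq_p edges_p sorted_p]; apply/is_tpathP.
split => // [i lt_ip | i lt_ip]; first exact: subsetP sub_HG _ (edges_p i lt_ip).
by rewrite -!lab_HG ?edges_p ?sorted_p //; lia.
Qed.

Lemma treach_lt G u v k : treach G u v k -> k < n.
Proof.
case/existsP => p /andP [/and3P [/card_uniqP card_p _ _] _].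
by rewrite -[n]card_ord -(size_tuple p) -[(size p).+1]/(size (u :: p)) -card_p max_card.
Qed.

Lemma tdist_treach G u v k : tdist G u v = Some k -> treach G u v k.
Proof.
rewrite /tdist; case: ifP => // lt_kn [<-].
have has_k : has (treach G u v) (iota 0 n) by rewrite has_find size_iota.
by have := nth_find 0 has_k; rewrite nth_iota ?add0n // -(size_iota 0 n) -has_find.
Qed.

Lemma treach_tdist G u v k : treach G u v k -> exists2 k', k' <= k & tdist G u v = Some k'.
Proof.
move=> reach_k; have lt_kn := treach_lt reach_k.
have find_le : find (treach G u v) (iota 0 n) <= k.
  rewrite leqNgt; apply/negP => /(before_find 0).
  by rewrite nth_iota ?add0n ?reach_k.
by exists (find (treach G u v) (iota 0 n)); rewrite // /tdist ifT //; lia.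
Qed.

Lemma preserver_forced_edge G H s t k e :
  tpreserver G H s -> treach G s t k ->
  (forall p, is_tpath G s p -> last s p = t -> size p <= k ->
     exists2 i, i < size p & e = tedge_at s p i) ->
  e \in tedges H.
Proof.
case=> sub_HG dist_HG /treach_tdist [k' le_k'k]; rewrite -dist_HG.
case/tdist_treach/existsP => p /andP [tpath_p /eqP last_p] forced.
have [|i lt_ip ->] := forced p (tpath_subgraph sub_HG tpath_p) last_p.
  by rewrite size_tuple.
by case/is_tpathP: tpath_p => _ /(_ i lt_ip).
Qed.

Lemma tsubgraph_size_le G H : tgraph_wf G -> tsubgraph H G -> tgsize H <= n ^ 2.
Proof.
move=> wf_G [sub_HG _]; apply: (leq_trans (subset_leq_card sub_HG)).
have : tedges G \subset [set [set x.1; x.2] | x in [set: 'I_n * 'I_n]].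
  apply/subsetP => e /wf_G [/eqP/cards2P [x [y [_ ->]]] _].
  by apply/imsetP; exists (x, y).
move/subset_leq_card/leq_trans; apply.
by apply: (leq_trans (leq_imset_card _ _)); rewrite cardsT card_prod card_ord.
Qed.

End TemporalPaths.

Lemma sum_double_rev k : \sum_(j < k) 2 * (k - j) = k * k.+1.
Proof.
elim: k => [|k IH]; first by rewrite big_ord0.
rewrite big_ord_recl /=; under eq_bigr do rewrite /bump /= subSS.
rewrite IH; lia.
Qed.

Section NestedPaths.

Variables m n : nat.
Hypothesis enough_vertices : 5 * m <= n.

Definition plen j := 2 * (m - j).

(* Odd positions of P_j visit the shared vertices j+1, ..., m and interior even
   positions the vertices m+3j+1, ...; such an edge of P_j joins two vertices at
   distance m+2j-1 or m+2j, which is why distinct paths share no edge. *)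
Definition pvtx j r :=
  if r == 0 then 0
  else if r == plen j then 4 * m + j + 1
  else if r %% 2 == 1 then j + r %/ 2 + 1 else m + 3 * j + r %/ 2.

Definition vtx j r : 'I_n.+1 := inord (pvtx j r).

Definition pedge j r := [set vtx j r; vtx j r.+1].

Definition plabel j r := j * (2 * m) + r.+1.

Local Ltac pvtx_arith := unfold pvtx, plen in *; do ![case: ifP; intro]; lia.

Lemma vtxK j r : j < m -> r <= plen j -> val (vtx j r) = pvtx j r.
Proof. by move=> lt_jm le_r; rewrite /= inordK //; pvtx_arith. Qed.

Lemma vtx0 j : vtx j 0 = ord0.
Proof. by apply: val_inj; rewrite /= inordK. Qed.

Lemma vtx_inj j r r' :
  j < m -> r <= plen j -> r' <= plen j -> vtx j r = vtx j r' -> r = r'.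
Proof. by move=> lt_jm le_r le_r' /(congr1 val); rewrite !vtxK //; pvtx_arith. Qed.

Lemma vtx_later j j' p p' : j < j' -> j' < m -> p <= plen j -> p' <= plen j' ->
  vtx j p = vtx j' p' -> p' < p \/ p' = 0.
Proof.
move=> lt_jj' lt_j'm le_p le_p' /(congr1 val).
by rewrite !vtxK //; [pvtx_arith | lia].
Qed.

Lemma vtx_target j j' p' : j < m -> j' < m -> p' <= plen j' ->
  vtx j' p' = vtx j (plen j) -> j' = j /\ p' = plen j.
Proof.
by move=> lt_jm lt_j'm le_p' /(congr1 val); rewrite !vtxK //; pvtx_arith.
Qed.

Lemma pedge_inj j r j' r' : j < m -> r < plen j -> j' < m -> r' < plen j' ->
  pedge j r = pedge j' r' -> j = j' /\ r = r'.
Proof.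
move=> lt_jm lt_r lt_j'm lt_r' eq_e.
have : vtx j r \in pedge j' r' by rewrite -eq_e set21.
have : vtx j r.+1 \in pedge j' r' by rewrite -eq_e set22.
rewrite !inE => /orP [] /eqP /(congr1 val) + /orP [] /eqP /(congr1 val).
all: rewrite !vtxK //; [pvtx_arith | lia..].
Qed.

Lemma plabel_le j r j' r' : r < plen j -> r' < plen j' ->
  plabel j r <= plabel j' r' -> j < j' \/ j = j' /\ r <= r'.
Proof. rewrite /plabel /plen => *; nia. Qed.

Definition path_steps := {j : 'I_m & 'I_(plen j)}.

Definition step_edge (x : path_steps) := pedge (tag x) (tagged x).

Definition paths_label e :=
  if [pick x | step_edge x == e] is Some x then plabel (tag x) (tagged x) else 0.

Definition paths_graph := TGraph [set step_edge x | x : path_steps] paths_label.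

Lemma step_edge_inj : injective step_edge.
Proof.
by case=> [j r] [j' r'] /pedge_inj [] //= /val_inj eq_jj'; subst j' => /val_inj ->.
Qed.

Lemma step_edgeP j r :
  j < m -> r < plen j -> {x : path_steps | tag x = j :> nat & tagged x = r :> nat}.
Proof. by move=> lt_jm lt_r; exists (@Tagged _ (Ordinal lt_jm) _ (Ordinal lt_r)). Qed.

Lemma paths_edgeP e :
  reflect (exists j r, [/\ j < m, r < plen j & e = pedge j r])
          (e \in tedges paths_graph).
Proof.
apply: (iffP imsetP) => [[[j r] _ ->] | [j [r [lt_jm lt_r ->]]]]; first by exists j, r.
have [x eq_j eq_r] := step_edgeP lt_jm lt_r.
by exists x; rewrite // /step_edge eq_r eq_j.
Qed.

Lemma paths_label_pedge j r :
  j < m -> r < plen j -> tlab paths_graph (pedge j r) = plabel j r.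
Proof.
move=> lt_jm lt_r; have [x <- <-] := step_edgeP lt_jm lt_r.
rewrite /= /paths_label; case: pickP => [y /eqP /step_edge_inj -> // | /(_ x)].
by rewrite eqxx.
Qed.

Lemma paths_graph_wf : tgraph_wf paths_graph.
Proof.
move=> e /paths_edgeP [j [r [lt_jm lt_r ->]]]; rewrite paths_label_pedge //.
split; last by rewrite /plabel addnS.
by rewrite cards2; case: eqP => // /(vtx_inj lt_jm); lia.
Qed.

Lemma paths_treach j : j < m -> treach paths_graph ord0 (vtx j (plen j)) (plen j).
Proof.
move=> lt_jm; set p := [seq vtx j r | r <- iota 1 (plen j)].
have size_p : size p == plen j by rewrite size_map size_iota.
have nth_p i : i <= plen j -> nth ord0 (ord0 :: p) i = vtx j i.
  case: i => [|i] le_i; first by rewrite vtx0.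
  by rewrite /= (nth_map 0) ?nth_iota ?size_iota // add1n.
apply/existsP; exists (Tuple size_p); rewrite /= (last_nth ord0) (eqP size_p) nth_p //.
rewrite eqxx andbT; apply/is_tpathP; rewrite (eqP size_p); split.
- have -> : ord0 :: p = [seq vtx j r | r <- iota 0 (plen j).+1] by rewrite /= vtx0.
  rewrite map_inj_in_uniq ?iota_uniq // => r r'; rewrite !mem_iota.
  by move=> le_r le_r'; apply: vtx_inj; lia.
- move=> i lt_i; rewrite /tedge_at !nth_p; [|lia..].
  by apply/paths_edgeP; exists j, i.
- move=> i lt_i; rewrite /tedge_at !nth_p ?paths_label_pedge; [|lia..].
  by rewrite /plabel; lia.
Qed.

Lemma mem_pedge v j r : v \in pedge j r -> exists2 q, r <= q <= r.+1 & v = vtx j q.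
Proof. by rewrite !inE => /orP [] /eqP ->; [exists r | exists r.+1]; rewrite ?leqnn ?leqnSn. Qed.

Lemma pedge_next v j r j' r' : j < m -> r < plen j -> j' < m -> r' < plen j' ->
  v \in pedge j r -> v \in pedge j' r' -> plabel j r <= plabel j' r' ->
  (j, r) != (j', r') -> r' <= r.+1 /\ (r' = r.+1 -> j' = j).
Proof.
move=> lt_jm lt_r lt_j'm lt_r' /mem_pedge [q le_q ->] /mem_pedge [q' le_q' eq_q'].
case/plabel_le => // [lt_jj' | [eq_jj' le_rr']].
  by have := vtx_later lt_jj' lt_j'm _ _ eq_q'; lia.
subst j'; rewrite xpair_eqE eqxx /= => neq_rr'.
by have := vtx_inj lt_jm _ _ eq_q'; lia.
Qed.

Section Walk.

Variable p : seq 'I_n.+1.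
Hypothesis p_tpath : is_tpath paths_graph ord0 p.

Lemma walk_edge i : i < size p ->
  exists j r, [/\ j < m, r < plen j & pedge j r = tedge_at ord0 p i].
Proof.
move=> lt_ip; case/is_tpathP: p_tpath => _ /(_ i lt_ip) /paths_edgeP.
by move=> [j [r [lt_jm lt_r ->]]] _; exists j, r.
Qed.

Lemma walk_next i j r j' r' : i.+1 < size p ->
  j < m -> r < plen j -> pedge j r = tedge_at ord0 p i ->
  j' < m -> r' < plen j' -> pedge j' r' = tedge_at ord0 p i.+1 ->
  r' <= r.+1 /\ (r' = r.+1 -> j' = j).
Proof.
move=> lt_ip lt_jm lt_r e_i lt_j'm lt_r' e_i'.
apply: (pedge_next lt_jm lt_r lt_j'm lt_r' (v := nth ord0 (ord0 :: p) i.+1)).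
- by rewrite e_i set22.
- by rewrite e_i' set21.
- case/is_tpathP: p_tpath => _ _ /(_ i lt_ip).
  by rewrite -e_i -e_i' !paths_label_pedge.
apply: contra_neq (tedge_at_succ_neq p_tpath lt_ip) => -[eq_jj' eq_rr'].
by rewrite -e_i -e_i' eq_jj' eq_rr'.
Qed.

Lemma walk_rank i j r : i < size p -> j < m -> r < plen j ->
  pedge j r = tedge_at ord0 p i -> r <= i.
Proof.
elim: i j r => [|i IH] j r lt_ip lt_jm lt_r e_i.
  have : ord0 \in pedge j r by rewrite e_i set21.
  by rewrite -(vtx0 j) !inE => /orP [] /eqP /(vtx_inj lt_jm); lia.
have [j0 [r0 [lt_j0m lt_r0 e_i0]]] := walk_edge (ltnW lt_ip).
have := IH _ _ (ltnW lt_ip) lt_j0m lt_r0 e_i0.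
have := walk_next lt_ip lt_j0m lt_r0 e_i0 lt_jm lt_r e_i; lia.
Qed.

Lemma walk_to_target j : j < m -> last ord0 p = vtx j (plen j) -> size p <= plen j ->
  size p = plen j /\ forall i, i < size p -> pedge j i = tedge_at ord0 p i.
Proof.
move=> lt_jm last_p le_size.
have size_gt0 : 0 < size p.
  rewrite lt0n; apply/negP => /eqP/size0nil p_nil; move: last_p.
  by rewrite p_nil /= -(vtx0 j) => /(vtx_inj lt_jm); rewrite /plen; lia.
set k := (size p).-1.
have lt_kp : k < size p by rewrite prednK.
have [j1 [r1 [lt_j1m lt_r1 e_k]]] := walk_edge lt_kp.
have [eq_j1 eq_r1] : j1 = j /\ r1.+1 = plen j.
  have : vtx j (plen j) \in pedge j1 r1.
    by rewrite e_k /tedge_at -last_p (last_nth ord0) -(prednK size_gt0) set22.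
  by rewrite !inE => /orP [] /eqP /esym /vtx_target; unfold plen in *; lia.
subst j1; have le_r1 := walk_rank lt_kp lt_jm lt_r1 e_k.
have size_p : size p = plen j by lia.
have walk_back d : d <= k -> pedge j (k - d) = tedge_at ord0 p (k - d).
  elim: d => [_ | d IH lt_dk]; first by rewrite subn0 -e_k; congr pedge; lia.
  set i := k - d.+1.
  have lt_ip : i.+1 < size p by lia.
  have e_next : pedge j i.+1 = tedge_at ord0 p i.+1.
    by rewrite (_ : i.+1 = k - d) ?IH //; lia.
  have [j0 [r0 [lt_j0m lt_r0 e_i]]] := walk_edge (ltnW lt_ip).
  have le_r0 := walk_rank (ltnW lt_ip) lt_j0m lt_r0 e_i.
  have [|le_i eq_j] := walk_next lt_ip lt_j0m lt_r0 e_i lt_jm _ e_next; first lia.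
  have eq_r0 : r0 = i by lia.
  by subst r0; rewrite -e_i eq_j.
split=> // i lt_ip.
by rewrite (_ : i = k - (k - i)) ?walk_back //; lia.
Qed.

End Walk.

Lemma paths_preserver_edges H :
  tpreserver paths_graph H ord0 -> tedges paths_graph \subset tedges H.
Proof.
move=> preserver_H; apply/subsetP => e /paths_edgeP [j [r [lt_jm lt_r ->]]].
apply: (preserver_forced_edge preserver_H (paths_treach lt_jm)) => q q_tpath last_q le_q.
have [size_q walk_q] := walk_to_target q_tpath lt_jm last_q le_q.
by exists r; rewrite ?walk_q ?size_q.
Qed.

Lemma card_paths_edges : #|tedges paths_graph| = m * m.+1.
Proof.
rewrite card_imset; last exact: step_edge_inj.
rewrite card_tagged sumnE big_map big_enum -sum_double_rev /=.
by apply: eq_bigr => j _; rewrite card_ord.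
Qed.

End NestedPaths.

Theorem corollary14 :
  exists a b N : nat, 0 < a /\ 0 < b /\
    forall n : nat, 0 < n -> N <= n ->
      exists (G : tgraph n) (s : 'I_n),
        tgraph_wf G /\
        forall H : tgraph n, tpreserver G H s ->
          n ^ 2 <= a * tgsize H /\ tgsize H <= b * n ^ 2.
Proof.
exists 50, 1, 6; do 2!split => //; case=> [//|n] _ le_6n.
set m := n %/ 5; have le_5m : 5 * m <= n by rewrite /m; lia.
exists (paths_graph m n), ord0; split; first exact: paths_graph_wf.
move=> H preserver_H; split; last first.
  by rewrite mul1n; apply: tsubgraph_size_le preserver_H.1; apply: paths_graph_wf.
have := subset_leq_card (paths_preserver_edges le_5m preserver_H).
rewrite card_paths_edges // -/(tgsize H) => le_mH.
apply: leq_trans (leq_mul (leqnn 50) le_mH).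
(* n.+1 <= 5 (m + 1) and 1 <= m give n.+1 ^ 2 <= 25 (m + 1) ^ 2 <= 50 m (m + 1). *)
have : n < 5 * m.+1 by rewrite /m; lia.
have : 0 < m by rewrite /m; lia.
nia.
Qed.
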